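(* Each of the following sets of four generalized Bell states in $\mathbb{C}^4\otimes\mathbb{C}^4$ is perfectly distinguishable by one-way LOCC using only projective measurements: the ten sets $\{\ket{\psi_{00}},\ket{\psi_{01}}\}\cup P$ with $P$ one of $\{\ket{\psi_{02}},\ket{\psi_{10}}\}$, $\{\ket{\psi_{02}},\ket{\psi_{21}}\}$, $\{\ket{\psi_{02}},\ket{\psi_{32}}\}$, $\{\ket{\psi_{10}},\ket{\psi_{13}}\}$, $\{\ket{\psi_{10}},\ket{\psi_{20}}\}$, $\{\ket{\psi_{10}},\ket{\psi_{31}}\}$, $\{\ket{\psi_{13}},\ket{\psi_{21}}\}$, $\{\ket{\psi_{20}},\ket{\psi_{21}}\}$, $\{\ket{\psi_{20}},\ket{\psi_{32}}\}$, $\{\ket{\psi_{21}},\ket{\psi_{31}}\}$; and the four sets $\{\ket{\psi_{00}},\ket{\psi_{02}}\}\cup Q$ with $Q$ one of $\{\ket{\psi_{10}},\ket{\psi_{12}}\}$, $\{\ket{\psi_{10}},\ket{\psi_{23}}\}$, $\{\ket{\psi_{10}},\ket{\psi_{30}}\}$, $\{\ket{\psi_{21}},\ket{\psi_{30}}\}$.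
   Context: Generalized Bell states in $\mathbb{C}^4\otimes\mathbb{C}^4$ (Alice holds the first factor, Bob the second): $\ket{\psi_{nm}}=\frac12\sum_{j=0}^{3}e^{2\pi i jn/4}\ket{j}_A\ket{j\oplus_4 m}_B$ for $n,m\in\{0,1,2,3\}$, where $j\oplus_4 m=(j+m)\bmod 4$. Perfect distinguishability by one-way LOCC using only projective measurements means: one party performs a projective measurement on her subsystem, communicates the outcome classically, and the other party then performs a projective measurement (depending on that outcome) whose result identifies with certainty which state of the set was shared. *)

From HB Require Import structures.
From mathcomp Require Import all_boot all_order all_algebra complex reals.
Set Implicit Arguments. Unset Strict Implicit. Unset Printing Implicit Defensive.
Import GRing.Theory Num.Theory.
Local Open Scope ring_scope.

Section QI.
Variable C : numClosedFieldType.

(* A vector of C^4 (x) C^4 is represented by its 4x4 coefficient matrix: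
   x j k = coefficient of |j>_A |k>_B. *)
Definition bistate := 'M[C]_4.

Definition adj (A : 'M[C]_4) : 'M[C]_4 := \matrix_(i, j) (A j i)^*.

(* generalized Bell state psi_{nm} = 1/2 sum_j e^{2 pi i j n/4} |j>|j+m mod 4>,
   with e^{2 pi i/4} = 'i *)
Definition bell (n m : nat) : bistate :=
  \matrix_(j < 4, k < 4)
    (2^-1 * 'i ^+ (j * n) * ((k : nat) == ((j + m) %% 4)%N)%:R).

Definition projective_measurement (n : nat) (P : 'I_n -> 'M[C]_4) : Prop :=
  [/\ forall a, adj (P a) = P a,
      forall a, P a *m P a = P a,
      forall a b, a != b -> P a *m P b = 0
    & \sum_(a < n) P a = 1%:M].

(* (A (x) B) x, in the matrix representation of C^4 (x) C^4 *)
Definition tensor_apply (A B : 'M[C]_4) (x : bistate) : bistate :=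
  A *m x *m B^T.

Definition sqnorm (x : bistate) : C := \sum_(j < 4) \sum_(k < 4) x j k * (x j k)^*.

Definition prob (PA PB : 'M[C]_4) (x : bistate) : C :=
  sqnorm (tensor_apply PA PB x).

(* One-way LOCC, Alice measures first (projective measurement P, outcome a),
   then Bob measures with projective measurement Q a (depending on a,
   outcome b); a guess g a b identifies the shared state with certainty:
   any outcome pair with nonzero probability for the state labelled l
   yields the guess l. *)
Definition oneway_AtoB (S : seq (nat * nat)) : Prop :=
  exists (n m : nat) (P : 'I_n -> 'M[C]_4) (Q : 'I_n -> 'I_m -> 'M[C]_4)
         (g : 'I_n -> 'I_m -> nat * nat),
    [/\ projective_measurement P,
        forall a, projective_measurement (Q a)
      & forall l, l \in S -> forall a b,
          prob (P a) (Q a b) (bell l.1 l.2) != 0 -> g a b = l].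

Definition oneway_BtoA (S : seq (nat * nat)) : Prop :=
  exists (n m : nat) (Q : 'I_n -> 'M[C]_4) (P : 'I_n -> 'I_m -> 'M[C]_4)
         (g : 'I_n -> 'I_m -> nat * nat),
    [/\ projective_measurement Q,
        forall b, projective_measurement (P b)
      & forall l, l \in S -> forall b a,
          prob (P b a) (Q b) (bell l.1 l.2) != 0 -> g b a = l].

Definition oneway_proj_distinguishable (S : seq (nat * nat)) : Prop :=
  oneway_AtoB S \/ oneway_BtoA S.

End QI.

From HB Require Import structures.
From mathcomp Require Import all_boot all_order all_algebra complex reals.
From mathcomp Require Import ring.
Set Implicit Arguments. Unset Strict Implicit. Unset Printing Implicit Defensive.
Import GRing.Theory Num.Theory.
Local Open Scope ring_scope.

(* Alice measures in an orthonormal basis of C^4 and Bob, knowing her outcome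
   a, measures in the basis formed by his conditional states (u_a^* (x) 1) psi
   of the four Bell states of the set; the protocol is perfect as soon as these
   conditional states are pairwise orthogonal.  All vectors involved have
   entries w^k / 2 with w a primitive 8th root of unity, so every inner product
   is a sum of four powers of w, which vanishes whenever its exponents split
   into two pairs of opposite roots.  For each of the fourteen sets one fixed
   basis for Alice works, and the orthogonality conditions are decided by
   computing on the exponents modulo 8. *)

Section ProjectiveMeasurements.
Variable C : numClosedFieldType.

Lemma adjM (A B : 'M[C]_4) : adj (A *m B) = adj B *m adj A.
Proof.
apply/matrixP=> i j; rewrite !mxE rmorph_sum; apply: eq_bigr => k _.
by rewrite !mxE rmorphM mulrC.
Qed.

Lemma adjK (A : 'M[C]_4) : adj (adj A) = A.
Proof. by apply/matrixP=> i j; rewrite !mxE conjCK. Qed.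

Lemma adj_delta_mx (a : 'I_4) : adj (delta_mx a a) = delta_mx a a :> 'M[C]_4.
Proof. by apply/matrixP=> i j; rewrite !mxE conjC_nat andbC. Qed.

Lemma sum_delta_mx_diag : \sum_(a < 4) delta_mx a a = 1%:M :> 'M[C]_4.
Proof.
apply/matrixP=> i j; rewrite summxE (bigD1 i) //= big1 => [|k nk].
  by rewrite !mxE eqxx /= addr0 eq_sym.
by rewrite mxE eq_sym (negPf nk).
Qed.

Definition basis_proj (U : 'M[C]_4) (a : 'I_4) : 'M[C]_4 :=
  U *m delta_mx a a *m adj U.

Lemma basis_proj_measurement (U : 'M[C]_4) :
  adj U *m U = 1%:M -> projective_measurement (basis_proj U).
Proof.
move=> unitU; have UUE a b :
    basis_proj U a *m basis_proj U b = U *m (delta_mx a a *m delta_mx b b) *m adj U.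
  by rewrite /basis_proj !mulmxA -(mulmxA _ (adj U) U) unitU mulmx1.
split.
- by move=> a; rewrite /basis_proj !adjM adjK adj_delta_mx mulmxA.
- by move=> a; rewrite UUE mul_delta_mx.
- by move=> a b ab; rewrite UUE mul_delta_mx_0 // mulmx0 mul0mx.
- rewrite /basis_proj -mulmx_suml -mulmx_sumr sum_delta_mx_diag mulmx1.
  exact: mulmx1C.
Qed.

Lemma delta_mx_mul_entry_eq0 (M : 'M[C]_4) a b :
  M a b = 0 -> delta_mx a a *m M *m delta_mx b b = 0.
Proof.
move=> Mab; apply/matrixP=> i j; rewrite !mxE; apply: big1 => k _.
rewrite !mxE; case: (eqVneq k b) => [->|kb]; last by rewrite /= mulr0.
rewrite big1 ?mul0r // => l _; rewrite !mxE.
by case: (eqVneq l a) => [->|la]; rewrite ?Mab ?mulr0 // andbF mul0r.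
Qed.

Lemma prob_basis_proj_eq0 (U W : 'M[C]_4) a b (x : bistate C) :
  (adj U *m x *m (adj W)^T) a b = 0 ->
  prob (basis_proj U a) (basis_proj W b) x = 0.
Proof.
move=> xab; rewrite /prob /tensor_apply /basis_proj !trmx_mul trmx_delta.
have -> : U *m delta_mx a a *m adj U *m x *m ((adj W)^T *m (delta_mx b b *m W^T))
   = U *m (delta_mx a a *m (adj U *m x *m (adj W)^T) *m delta_mx b b) *m W^T.
  by rewrite !mulmxA.
rewrite delta_mx_mul_entry_eq0 // mulmx0 mul0mx /sqnorm.
by apply: big1 => j _; apply: big1 => k _; rewrite mxE mul0r.
Qed.

End ProjectiveMeasurements.

Section EighthRootPhases.
Variable C : numClosedFieldType.
Variable w : C.
Hypothesis sqr_w : w ^+ 2 = 'i.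
Hypothesis conj_w : w^* = w ^+ 7.

Lemma w_expr4 : w ^+ 4 = -1.
Proof. by rewrite (exprM w 2 2) sqr_w sqrCi. Qed.

Lemma w_expr8 : w ^+ 8 = 1.
Proof. by rewrite (exprM w 4 2) w_expr4 sqrrN expr1n. Qed.

Lemma w_expr_mod8 k : w ^+ k = w ^+ (k %% 8)%N.
Proof. by rewrite {1}(divn_eq k 8) exprD mulnC exprM w_expr8 expr1n mul1r. Qed.

Definition all_lt4 (P : pred nat) := all P (iota 0 4).

Lemma all_lt4P (P : pred nat) : all_lt4 P -> forall a : 'I_4, P a.
Proof. by move/allP=> P_lt4 a; apply: P_lt4; rewrite mem_iota ltn_ord. Qed.

Definition antipodal (x y : nat) := (x %% 8 == (y + 4) %% 8)%N.

Lemma w_expr_antipodal x y : antipodal x y -> w ^+ x = - w ^+ y.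
Proof. by move/eqP=> xy; rewrite w_expr_mod8 xy -w_expr_mod8 exprD w_expr4 mulrN1. Qed.

Definition antipodal_pairing (r : nat -> nat) :=
  [|| antipodal (r 0) (r 1) && antipodal (r 2) (r 3),
      antipodal (r 0) (r 2) && antipodal (r 1) (r 3)
    | antipodal (r 0) (r 3) && antipodal (r 1) (r 2)].

Lemma sum_w_expr_eq0 (r : nat -> nat) :
  antipodal_pairing r -> \sum_(j < 4) w ^+ r j = 0.
Proof.
rewrite !big_ord_recr big_ord0 /= add0r.
by case/or3P => /andP [h1 h2]; rewrite (w_expr_antipodal h1) (w_expr_antipodal h2); ring.
Qed.

Lemma conj_half_w_expr k : (w ^+ k / 2)^* = w ^+ (7 * k) / 2.
Proof. by rewrite rmorphM rmorphXn /= conj_w -exprM fmorphV rmorph_nat. Qed.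

Definition phase_mx (e : nat -> nat -> nat) : 'M[C]_4 :=
  \matrix_(j, a) (w ^+ e j a / 2).

Definition orthonormal_phases (e : nat -> nat -> nat) :=
  all_lt4 (fun a => all_lt4 (fun b =>
     (a != b) ==> antipodal_pairing (fun j => 7 * e j a + e j b)%N)).

Lemma phase_mx_unitary (e : nat -> nat -> nat) :
  orthonormal_phases e -> adj (phase_mx e) *m phase_mx e = 1%:M.
Proof.
move=> /all_lt4P orth_e; apply/matrixP => a b; rewrite !mxE.
under eq_bigr => j _ do rewrite !mxE conj_half_w_expr mulrACA -exprD.
rewrite -mulr_suml; case: (eqVneq a b) => [<-|ab].
  under eq_bigr => j _ do rewrite addnC -mulSn exprM w_expr8 expr1n.
  by rewrite sumr_const card_ord /=; field.
by move/all_lt4P/(_ b)/implyP/(_ ab): (orth_e a) => /sum_w_expr_eq0 ->; rewrite mul0r.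
Qed.

Lemma phase_mx_bell_entry (e f : nat -> nat -> nat) (n m : nat) (a b : 'I_4) :
  (adj (phase_mx e) *m bell C n m *m (adj (phase_mx f))^T) a b =
  (\sum_(j < 4) w ^+ (7 * e j a + 2 * (j * n) + 7 * f ((j + m) %% 4) b)%N)
     * (2^-1 * 2^-1 * 2^-1).
Proof.
rewrite mxE; under eq_bigr => k _ do rewrite mxE big_distrl /=.
rewrite exchange_big /= mulr_suml; apply: eq_bigr => j _.
rewrite (bigD1 (Ordinal (ltn_pmod (j + m) (isT : (0 < 4)%N)))) //= big1 => [|k jm_k].
  by rewrite !mxE /= eqxx !conj_half_w_expr -sqr_w -exprM !exprD /=; ring.
rewrite !mxE.
have /negPf -> : (k : nat) != ((j + m) %% 4)%N := jm_k.
by rewrite !mulr0 mul0r.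
Qed.

(* [e] gives Alice's basis, [f a] Bob's basis after Alice's outcome [a], and
   Bob's outcome [b] announces the [b]-th state of [S]. *)
Definition oneway_certificate (S : seq (nat * nat)) (e : nat -> nat -> nat)
    (f : nat -> nat -> nat -> nat) :=
  [&& size S == 4%N, orthonormal_phases e,
      all_lt4 (fun a => orthonormal_phases (f a))
    & all_lt4 (fun a => all_lt4 (fun b => all_lt4 (fun c => (b != c) ==>
        let: (n, m) := nth (0, 0)%N S c in
        antipodal_pairing
          (fun j => 7 * e j a + 2 * (j * n) + 7 * f a ((j + m) %% 4) b)%N)))].

Lemma oneway_certificate_AtoB S e f :
  oneway_certificate S e f -> oneway_AtoB C S.
Proof.
case/and4P => /eqP size_S orth_e /all_lt4P orth_f /all_lt4P null_amp.
exists 4%N, 4%N, (basis_proj (phase_mx e)), (fun a => basis_proj (phase_mx (f a))),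
  (fun a b => nth (0, 0)%N S b); split.
- exact/basis_proj_measurement/phase_mx_unitary.
- by move=> a; exact/basis_proj_measurement/phase_mx_unitary.
move=> l l_S a b; case: (eqVneq (nth (0, 0)%N S b) l) => // Sb_l.
move=> /eqP nz; exfalso; apply: nz.
have c_lt4 : (index l S < 4)%N by rewrite -size_S index_mem.
have b_ne_l : b != Ordinal c_lt4 by apply: contra_neq Sb_l => ->; exact: nth_index.
move/all_lt4P/(_ b)/all_lt4P/(_ (Ordinal c_lt4))/implyP/(_ b_ne_l): (null_amp a).
rewrite /= nth_index //; case: l {l_S Sb_l c_lt4 b_ne_l} => n m null_nm.
by rewrite prob_basis_proj_eq0 // phase_mx_bell_entry (sum_w_expr_eq0 null_nm) mul0r.
Qed.

End EighthRootPhases.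

Lemma conj_sqrtCi (C : numClosedFieldType) : (sqrtC ('i : C))^* = sqrtC 'i ^+ 7.
Proof.
set w := sqrtC 'i; have sqr_w : w ^+ 2 = 'i := sqrtCK _.
have w_conj_w : w * w^* = 1 by rewrite -normCK -normrX sqr_w normCi.
by rewrite -[LHS]mulr1 -(w_expr8 sqr_w) (exprS w 7) mulrA [w^* * w]mulrC w_conj_w mul1r.
Qed.

Definition alice_phase (j a : nat) : nat := (
  nth 0 (nth [::] [:: [:: 0; 1; 0; 5]; [:: 0; 3; 4; 3];
                      [:: 0; 5; 0; 1]; [:: 0; 7; 4; 7]] a) j)%N.

(* The exponents of Bob's conditional state for the [b]-th state (n, m) of
   [S]: its entry k is conj (u_a (k - m)) * 'i^((k - m) n), up to a factor. *)
Definition bob_phase (S : seq (nat * nat)) (a k b : nat) : nat :=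
  let: (n, m) := nth (0, 0)%N S b in
  let j := ((k + 4 - m) %% 4)%N in (7 * alice_phase j a + 2 * (j * n))%N.

Lemma oneway_certificate_distinguishable (R : realType) S :
  oneway_certificate S alice_phase (bob_phase S) ->
  oneway_proj_distinguishable (R[i]) S.
Proof.
by move=> cert; left; exact: oneway_certificate_AtoB (sqrtCK 'i) (conj_sqrtCi _) _ _ _ cert.
Qed.

Theorem theorem3 (R : realType) :
  (forall P : seq (nat * nat),
     P \in [:: [:: (0,2); (1,0)]; [:: (0,2); (2,1)]; [:: (0,2); (3,2)];
               [:: (1,0); (1,3)]; [:: (1,0); (2,0)]; [:: (1,0); (3,1)];
               [:: (1,3); (2,1)]; [:: (2,0); (2,1)]; [:: (2,0); (3,2)];
               [:: (2,1); (3,1)]]%N ->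
     oneway_proj_distinguishable (R[i]) ([:: (0,0); (0,1)]%N ++ P))
  /\
  (forall Q : seq (nat * nat),
     Q \in [:: [:: (1,0); (1,2)]; [:: (1,0); (2,3)]; [:: (1,0); (3,0)];
               [:: (2,1); (3,0)]]%N ->
     oneway_proj_distinguishable (R[i]) ([:: (0,0); (0,2)]%N ++ Q)).
Proof.
have certified_all (S0 : seq (nat * nat)) (sets : seq (seq (nat * nat))) :
    all (fun P => oneway_certificate (S0 ++ P) alice_phase (bob_phase (S0 ++ P))) sets ->
    forall P, P \in sets -> oneway_proj_distinguishable (R[i]) (S0 ++ P).
  by move=> /allP cert P /cert; apply: oneway_certificate_distinguishable.
by split; apply: certified_all; vm_compute.
Qed.
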